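(* For every non-singular $\rho\in\mathcal{D}$ at which $f$ is differentiable and every $\alpha>0$, $$\langle\nabla f(\rho),\rho(\alpha)-\rho\rangle\le-\frac{D(\rho(\alpha),\rho)}{\alpha}.$$
   Context: $\mathcal{D}=\{\rho\in\mathbb{C}^{d\times d}:\rho\succeq0,\ \operatorname{tr}\rho=1\}$; $f$ is a convex function on $d\times d$ Hermitian matrices; $\langle A,B\rangle=\operatorname{tr}(A^{\mathrm H}B)$ and $\nabla f(\rho)$ is the Hermitian gradient w.r.t. it. $\rho(\alpha):=\exp[\log\rho-\alpha\nabla f(\rho)]/\operatorname{tr}\exp[\log\rho-\alpha\nabla f(\rho)]$. $D(\sigma,\rho)=\operatorname{tr}(\sigma\log\sigma)-\operatorname{tr}(\sigma\log\rho)-\operatorname{tr}(\sigma-\rho)$ (quantum relative entropy, with $0\log0=0$). *)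

From HB Require Import structures.
From mathcomp Require Import all_boot all_order all_algebra.
From mathcomp Require Import sesquilinear spectral.
From mathcomp Require Import complex.
From mathcomp Require Import reals.
From mathcomp.analysis Require Import sequences exp.

Set Implicit Arguments.
Unset Strict Implicit.
Unset Printing Implicit Defensive.

Import Order.TTheory GRing.Theory Num.Theory Num.Def.
Local Open Scope ring_scope.
Local Open Scope complex_scope.

Section QDefs.
Variable R : realType.
Local Notation C := (R[i]).

Definition hadj {d} (A : 'M[C]_d) : 'M[C]_d := map_mx conjC (trmx A).

Definition hip {d} (A B : 'M[C]_d) : C := \tr (hadj A *m B).

Definition hermitian {d} (A : 'M[C]_d) : Prop := A \is hermsymmx.

Definition psd {d} (A : 'M[C]_d) : Prop :=
  hermitian A /\ forall v : 'rV[C]_d, 0 <= (v *m A *m map_mx conjC (trmx v)) 0 0.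

Definition density {d} (rho : 'M[C]_d) : Prop := psd rho /\ \tr rho = 1.

Definition nonsingular {d} (rho : 'M[C]_d) : Prop := rho \in unitmx.

Definition fcalc (g : R -> R) {d} (A : 'M[C]_d) : 'M[C]_d :=
  let U := spectralmx A in
  hadj U *m diag_mx (map_mx (fun z : C => (g (complex.Re z))%:C) (spectral_diag A)) *m U.

Definition mexp {d} (A : 'M[C]_d) : 'M[C]_d := fcalc (@expR R) A.
Definition mlog {d} (A : 'M[C]_d) : 'M[C]_d := fcalc (@ln R) A.

Definition xlogx (x : R) : R := if x == 0 then 0 else x * ln x.

Definition relent {d} (sigma rho : 'M[C]_d) : C :=
  \tr (fcalc xlogx sigma) - \tr (sigma *m mlog rho) - \tr (sigma - rho).

Definition rho_step {d} (G rho : 'M[C]_d) (alpha : R) : 'M[C]_d :=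
  let M := mexp (mlog rho - alpha%:C *: G) in (\tr M)^-1 *: M.

Definition fnorm {d} (H : 'M[C]_d) : R := Num.sqrt (complex.Re (hip H H)).

Definition convex_herm {d} (f : 'M[C]_d -> R) : Prop :=
  forall A B : 'M[C]_d, hermitian A -> hermitian B -> forall t : R, 0 <= t <= 1 ->
    f ((1 - t)%:C *: A + t%:C *: B) <= (1 - t) * f A + t * f B.

Definition herm_gradient {d} (f : 'M[C]_d -> R) (rho G : 'M[C]_d) : Prop :=
  hermitian G /\
  forall eps : R, 0 < eps -> exists2 delta : R, 0 < delta &
    forall H : 'M[C]_d, hermitian H -> fnorm H < delta ->
      `| f (rho + H) - f rho - complex.Re (hip G H) | <= eps * fnorm H.

End QDefs.

(* With H := log rho - alpha G one has rho(alpha) = exp H / Z, Z = tr exp H, and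
   alpha <G, rho(alpha) - rho> = tr ((log rho - H) (rho(alpha) - rho)).  Since
   tr (rho(alpha) log rho(alpha)) = tr (H rho(alpha)) - ln Z, adding D(rho(alpha), rho)
   leaves tr (H rho) - tr (rho log rho) - ln Z, which is nonpositive by Gibbs'
   variational principle.  In the eigenbases (u_i) of H and (w_j) of rho that
   principle is 1 + t <= exp t averaged against the doubly stochastic matrix
   |<u_i, w_j>|^2. *)

From HB Require Import structures.
From mathcomp Require Import all_boot all_order all_algebra.
From mathcomp Require Import sesquilinear spectral.
From mathcomp Require Import complex.
From mathcomp Require Import reals.
From mathcomp.analysis Require Import sequences exp.
From mathcomp Require Import ring lra.
Import Order.TTheory GRing.Theory Num.Theory Num.Def.
Local Open Scope ring_scope.
Local Open Scope complex_scope.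

Set Implicit Arguments.
Unset Strict Implicit.
Unset Printing Implicit Defensive.

Lemma sum1_ord_gt0 (V : nzSemiRingType) n (r : 'I_n -> V) :
  \sum_i r i = 1 -> (0 < n)%N.
Proof. by case: n r => // r; rewrite big_ord0 => /eqP; rewrite eq_sym oner_eq0. Qed.

Lemma sum_expR_gt0 (R : realType) n (h : 'I_n -> R) :
  (0 < n)%N -> 0 < \sum_i expR (h i).
Proof.
move=> n_gt0; rewrite (bigD1 (Ordinal n_gt0)) //= ltr_pwDl ?expR_gt0 //.
by rewrite sumr_ge0 // => i _; exact/ltW/expR_gt0.
Qed.

Section DoublyStochastic.
Variables (R : realType) (n : nat) (q : 'I_n -> 'I_n -> R).
Hypothesis q_row : forall i, \sum_j q i j = 1.
Hypothesis q_col : forall j, \sum_i q i j = 1.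

Lemma sum_rowE (a : 'I_n -> R) : \sum_i \sum_j a i * q i j = \sum_i a i.
Proof. by apply: eq_bigr => i _; rewrite -mulr_sumr q_row mulr1. Qed.

Lemma sum_colE (b : 'I_n -> R) : \sum_i \sum_j b j * q i j = \sum_j b j.
Proof.
by rewrite exchange_big; apply: eq_bigr => j _; rewrite -mulr_sumr q_col mulr1.
Qed.

Hypothesis q_ge0 : forall i j, 0 <= q i j.

Lemma gibbs_doubly_stochastic (r h : 'I_n -> R) :
  (forall j, 0 < r j) -> \sum_j r j = 1 ->
  \sum_i \sum_j h i * r j * q i j <=
    ln (\sum_i expR (h i)) + \sum_j r j * ln (r j).
Proof.
move=> r_gt0 r1; set z := \sum_i expR (h i).
have z_gt0 : 0 < z := sum_expR_gt0 h (sum1_ord_gt0 r1).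
(* [1 + t <= exp t] at [t = h i - ln (r j) - ln z] *)
have pointwise i j : r j * q i j * (1 + (h i - ln (r j) - ln z))
    <= expR (h i) / z * q i j.
  have -> : expR (h i) / z * q i j = r j * q i j * expR (h i - ln (r j) - ln z).
    rewrite !expRD !expRN !lnK ?posrE //; field.
    by rewrite !gt_eqF.
  by rewrite ler_wpM2l ?mulr_ge0 ?(ltW (r_gt0 j)) ?expR_ge1Dx.
have : \sum_i \sum_j r j * q i j * (1 + (h i - ln (r j) - ln z))
    <= \sum_i \sum_j expR (h i) / z * q i j.
  by apply: ler_sum => i _; apply: ler_sum => j _; exact: pointwise.
rewrite sum_rowE -mulr_suml divff ?gt_eqF //.
rewrite (eq_bigr (fun i => \sum_j h i * r j * q i j
    + \sum_j r j * (1 - ln (r j) - ln z) * q i j)); last first.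
  by move=> i _; rewrite -big_split; apply: eq_bigr => j _ /=; ring.
rewrite big_split /= sum_colE.
have -> : \sum_j r j * (1 - ln (r j) - ln z) = 1 - \sum_j r j * ln (r j) - ln z.
  under eq_bigr do rewrite mulrBr mulrBr mulr1.
  by rewrite !sumrB -mulr_suml r1 mul1r.
lra.
Qed.

End DoublyStochastic.

Section UnitaryDiagonalization.
Variable R : realType.
Local Notation C := R[i].

Lemma hadjM n (A B : 'M[C]_n) : hadj (A *m B) = hadj B *m hadj A.
Proof. by rewrite /hadj trmx_mul map_mxM. Qed.

Lemma hadjK n (A : 'M[C]_n) : hadj (hadj A) = A.
Proof. exact: trmxCK. Qed.

Lemma hadj_unitary n (U : 'M[C]_n) : (hadj U \is unitarymx) = (U \is unitarymx).
Proof. exact: trmxC_unitary. Qed.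

Lemma mulmx_hadj_unitary n (U : 'M[C]_n) : U \is unitarymx -> U *m hadj U = 1%:M.
Proof. by move/unitarymxP. Qed.

Lemma mul_hadjmx_unitary n (U : 'M[C]_n) : U \is unitarymx -> hadj U *m U = 1%:M.
Proof. by rewrite -hadj_unitary => /mulmx_hadj_unitary; rewrite hadjK. Qed.

Lemma hermitianP n (A : 'M[C]_n) : reflect (hadj A = A) (A \is hermsymmx).
Proof.
by apply: (iffP (is_hermitianmxP _ _ _)); rewrite expr0 scale1r => /esym.
Qed.

Lemma hermitianB_realZ n (A B : 'M[C]_n) (c : R) :
  A \is hermsymmx -> B \is hermsymmx -> A - c%:C *: B \is hermsymmx.
Proof.
move=> /hermitianP hA /hermitianP hB; apply/hermitianP.
rewrite -{2}hA -{2}hB; apply/matrixP => i j.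
rewrite !mxE rmorphB rmorphM; congr (_ - _ * _); exact: conjc_real.
Qed.

Definition diag_real n (x : 'I_n -> R) : 'M[C]_n := diag_mx (\row_i (x i)%:C).

Definition diag_conj n (U : 'M[C]_n) (x : 'I_n -> R) : 'M[C]_n :=
  hadj U *m diag_real x *m U.

Definition eigvals n (A : 'M[C]_n) (i : 'I_n) : R := complex.Re (spectral_diag A 0 i).

Lemma fcalc_eigvals (g : R -> R) n (A : 'M[C]_n) :
  fcalc g A = diag_conj (spectralmx A) (fun i => g (eigvals A i)).
Proof. by congr (_ *m diag_mx _ *m _); apply/rowP => i; rewrite !mxE. Qed.

Lemma hermitian_diag_conj n (A : 'M[C]_n) : A \is hermsymmx ->
  A = diag_conj (spectralmx A) (eigvals A).
Proof.
move=> hA; have /orthomx_spectralP {1}-> := hermitian_normalmx hA.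
rewrite [invmx _](invmx_unitary (spectral_unitarymx A)).
congr (_ *m diag_mx _ *m _); apply/rowP => i; rewrite mxE RRe_real //.
by move/mxOverP: (hermitian_spectral_diag_real hA) => /(_ 0 i).
Qed.

Lemma hadj_diag_conj n (U : 'M[C]_n) x : hadj (diag_conj U x) = diag_conj U x.
Proof.
rewrite /diag_conj !hadjM hadjK mulmxA; congr (_ *m _ *m _).
apply/matrixP => i j; rewrite !mxE.
have [->|_] := eqVneq i j; last by rewrite /= !mulr0n rmorph0.
by rewrite mulr1n; exact: conjc_real.
Qed.

Lemma diag_conj_hermitian n (U : 'M[C]_n) x : diag_conj U x \is hermsymmx.
Proof. exact/hermitianP/hadj_diag_conj. Qed.

Lemma fcalc_hermitian (g : R -> R) n (A : 'M[C]_n) : fcalc g A \is hermsymmx.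
Proof. by rewrite fcalc_eigvals diag_conj_hermitian. Qed.

(* Whenever [T i j != 0], the intertwining forces [x i = y j]. *)
Lemma diag_real_intertwine_map (g : R -> R) n (T : 'M[C]_n) x y :
  diag_real x *m T = T *m diag_real y ->
  diag_real (fun i => g (x i)) *m T = T *m diag_real (fun i => g (y i)).
Proof.
move/matrixP=> xTy; apply/matrixP => i j; move: (xTy i j).
rewrite !mul_diag_mx !mul_mx_diag !mxE.
have [->|T_neq0] := eqVneq (T i j) 0; first by rewrite !mulr0 !mul0r.
by rewrite [T i j * _]mulrC => /(mulIf T_neq0)/complexI ->; rewrite mulrC.
Qed.

Lemma diag_conj_map (g : R -> R) n (P Q : 'M[C]_n) x y :
  P \is unitarymx -> Q \is unitarymx -> diag_conj P x = diag_conj Q y ->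
  diag_conj P (fun i => g (x i)) = diag_conj Q (fun i => g (y i)).
Proof.
move=> uP uQ PxQy; set T := P *m hadj Q.
have xTy : diag_real x *m T = T *m diag_real y.
  have := congr1 (fun X => P *m X *m hadj Q) PxQy.
  rewrite /diag_conj /T !mulmxA (mulmx_hadj_unitary uP) mul1mx.
  by rewrite -!mulmxA (mulmx_hadj_unitary uQ) mulmx1 => ->; rewrite !mulmxA.
have -> : diag_conj P (fun i => g (x i)) =
    hadj P *m (diag_real (fun i => g (x i)) *m T) *m Q.
  by rewrite /diag_conj /T -!mulmxA (mul_hadjmx_unitary uQ) mulmx1.
rewrite (diag_real_intertwine_map g xTy) /diag_conj /T !mulmxA.
by rewrite (mul_hadjmx_unitary uP) mul1mx.
Qed.

Lemma fcalc_diag_conj (g : R -> R) n (U : 'M[C]_n) x : U \is unitarymx ->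
  fcalc g (diag_conj U x) = diag_conj U (fun i => g (x i)).
Proof.
move=> uU; rewrite fcalc_eigvals.
apply: (diag_conj_map g (spectral_unitarymx _) uU).
by rewrite -hermitian_diag_conj ?diag_conj_hermitian.
Qed.

Lemma diag_realM n (x y : 'I_n -> R) :
  diag_real x *m diag_real y = diag_real (fun i => x i * y i).
Proof.
apply/matrixP => i j; rewrite mul_diag_mx !mxE.
by have [->|_] := eqVneq i j; rewrite ?mulr1n ?mulr0n ?mulr0 // rmorphM.
Qed.

Lemma diag_conjM n (U : 'M[C]_n) x y : U \is unitarymx ->
  diag_conj U x *m diag_conj U y = diag_conj U (fun i => x i * y i).
Proof.
move=> uU; rewrite /diag_conj !mulmxA (mulmxtVK _ uU) -diag_realM.
by rewrite -[hadj U *m _ *m _]mulmxA.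
Qed.

Lemma diag_conjZ n (U : 'M[C]_n) x (c : R) :
  c%:C *: diag_conj U x = diag_conj U (fun i => c * x i).
Proof.
rewrite /diag_conj scalemxAl scalemxAr; congr (_ *m _ *m _).
by apply/matrixP => i j; rewrite !mxE mulrnAr rmorphM.
Qed.

Lemma tr_diag_conj n (U : 'M[C]_n) x : U \is unitarymx ->
  \tr (diag_conj U x) = (\sum_i x i)%:C.
Proof.
move=> uU; rewrite /diag_conj mxtrace_mulC mulmxA (mulmx_hadj_unitary uU).
by rewrite mul1mx mxtrace_diag rmorph_sum; apply: eq_bigr => i _; rewrite mxE.
Qed.

End UnitaryDiagonalization.

Section Densities.
Variable R : realType.
Local Notation C := R[i].

Definition sqmod (z : C) : R := complex.Re z ^+ 2 + complex.Im z ^+ 2.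

Lemma mul_conjC_sqmod (z : C) : z * conjC z = (sqmod z)%:C.
Proof.
case: z => a b; apply/eqP; rewrite eq_complex /sqmod /=.
by apply/andP; split; apply/eqP; ring.
Qed.

Lemma sqmod_ge0 (z : C) : 0 <= sqmod z.
Proof. by rewrite addr_ge0 ?sqr_ge0. Qed.

Lemma unitary_sqmod_row n (Y : 'M[C]_n) i : Y \is unitarymx ->
  \sum_j sqmod (Y i j) = 1.
Proof.
move=> /mulmx_hadj_unitary/matrixP/(_ i i); rewrite !mxE eqxx mulr1n => YYi.
apply: complexI; rewrite rmorph1 -YYi rmorph_sum.
by apply: eq_bigr => j _; rewrite !mxE mul_conjC_sqmod.
Qed.

Lemma unitary_sqmod_col n (Y : 'M[C]_n) j : Y \is unitarymx ->
  \sum_i sqmod (Y i j) = 1.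
Proof.
move=> /mul_hadjmx_unitary/matrixP/(_ j j); rewrite !mxE eqxx mulr1n => YYj.
apply: complexI; rewrite rmorph1 -YYj rmorph_sum.
by apply: eq_bigr => i _; rewrite !mxE mulrC mul_conjC_sqmod.
Qed.

(* The weights [sqmod (P Q^H)_ij] form the doubly stochastic matrix relating
   the two eigenbases. *)
Lemma tr_diag_conjM n (P Q : 'M[C]_n) x y : P \is unitarymx -> Q \is unitarymx ->
  \tr (diag_conj P x *m diag_conj Q y) =
  (\sum_i \sum_j x i * y j * sqmod ((P *m hadj Q) i j))%:C.
Proof.
move=> uP uQ; rewrite /diag_conj.
have -> : hadj P *m diag_real x *m P *m (hadj Q *m diag_real y *m Q) =
    hadj P *m (diag_real x *m (P *m hadj Q) *m diag_real y *m hadj (P *m hadj Q)) *m P.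
  by rewrite hadjM hadjK !mulmxA (mulmxKtV _ uP) // -!mulmxA.
rewrite mxtrace_mulC (mulmxA P) (mulmx_hadj_unitary uP) mul1mx.
set Y := P *m hadj Q; rewrite /mxtrace rmorph_sum; apply: eq_bigr => i _.
rewrite mul_diag_mx mul_mx_diag mxE rmorph_sum; apply: eq_bigr => j _.
by rewrite !mxE !rmorphM -[X in _ = _ * X]mul_conjC_sqmod; ring.
Qed.

Lemma psd_diag_conj_ge0 n (U : 'M[C]_n) x i : U \is unitarymx ->
  psd (diag_conj U x) -> 0 <= x i.
Proof.
move=> uU [_ /(_ (row i U))].
have -> : row i U *m diag_conj U x = row i (diag_real x *m U).
  by rewrite -row_mul /diag_conj !mulmxA (mulmx_hadj_unitary uU) mul1mx.
rewrite mul_diag_mx !mxE (eq_bigr (fun j => (x i)%:C * (sqmod (U i j))%:C)).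
  by rewrite -mulr_sumr -rmorph_sum (unitary_sqmod_row _ uU) mulr1 ler0c.
by move=> j _; rewrite !mxE -mulrA mul_conjC_sqmod.
Qed.

Lemma unit_diag_conj_neq0 n (U : 'M[C]_n) x i : diag_conj U x \in unitmx -> x i != 0.
Proof.
rewrite !unitmx_mul => /andP[/andP[_ unit_x] _].
apply: contraTneq unit_x => xi0.
by rewrite unitmxE det_diag (bigD1 i) //= mxE xi0 rmorph0 mul0r unitr0.
Qed.

Lemma density_eigvals n (rho : 'M[C]_n) : density rho -> nonsingular rho ->
  (forall i, 0 < eigvals rho i) /\ \sum_i eigvals rho i = 1.
Proof.
move=> [psd_rho tr_rho] unit_rho; have rhoE := hermitian_diag_conj psd_rho.1.
have uW := spectral_unitarymx rho.
rewrite /nonsingular rhoE in psd_rho tr_rho unit_rho; split.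
  move=> i; rewrite lt0r (unit_diag_conj_neq0 _ unit_rho) /=.
  exact: psd_diag_conj_ge0 uW psd_rho.
by apply: complexI; rewrite -(tr_diag_conj _ uW) tr_rho.
Qed.

End Densities.

Section GibbsState.
Variable R : realType.
Local Notation C := R[i].

Definition gibbs_state n (H : 'M[C]_n) : 'M[C]_n := (\tr (mexp H))^-1 *: mexp H.

Definition log_partition n (H : 'M[C]_n) : R := ln (\sum_i expR (eigvals H i)).

Lemma tr_mexp n (H : 'M[C]_n) : \tr (mexp H) = (\sum_i expR (eigvals H i))%:C.
Proof. by rewrite /mexp fcalc_eigvals tr_diag_conj ?spectral_unitarymx. Qed.

Section Spectrum.
Variables (n : nat) (H : 'M[C]_n).
Hypotheses (n_gt0 : (0 < n)%N) (hH : H \is hermsymmx).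

Lemma gibbs_state_diag_conj : gibbs_state H = diag_conj (spectralmx H)
  (fun i => (\sum_j expR (eigvals H j))^-1 * expR (eigvals H i)).
Proof. by rewrite /gibbs_state tr_mexp -fmorphV /mexp fcalc_eigvals diag_conjZ. Qed.

Lemma tr_gibbs_state : \tr (gibbs_state H) = 1.
Proof.
rewrite gibbs_state_diag_conj tr_diag_conj ?spectral_unitarymx //.
by rewrite -mulr_sumr mulVf ?gt_eqF ?sum_expR_gt0.
Qed.

(* [ln p_i = h_i - ln Z] for the Gibbs weights [p_i = exp h_i / Z]. *)
Lemma tr_xlogx_gibbs_state :
  \tr (fcalc (@xlogx R) (gibbs_state H)) =
  \tr (H *m gibbs_state H) - (log_partition H)%:C.
Proof.
have uU := spectral_unitarymx H; have Z_gt0 := sum_expR_gt0 (eigvals H) n_gt0.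
rewrite {2}(hermitian_diag_conj hH) gibbs_state_diag_conj fcalc_diag_conj //.
rewrite diag_conjM // !tr_diag_conj // -rmorphB; congr _%:C.
set Z := \sum_j expR (eigvals H j); rewrite /log_partition -/Z.
have -> : ln Z = \sum_i ln Z * (Z^-1 * expR (eigvals H i)).
  by rewrite -mulr_sumr -mulr_sumr mulVf ?gt_eqF // mulr1.
rewrite -sumrB; apply: eq_bigr => i _.
have p_gt0 : 0 < Z^-1 * expR (eigvals H i) by rewrite mulr_gt0 ?invr_gt0 ?expR_gt0.
rewrite /xlogx gt_eqF // lnM ?posrE ?invr_gt0 ?expR_gt0 // lnV ?posrE // expRK.
ring.
Qed.

End Spectrum.

Lemma gibbs_variational n (H rho : 'M[C]_n) :
  H \is hermsymmx -> density rho -> nonsingular rho ->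
  \tr (H *m rho) <= (log_partition H)%:C + \tr (rho *m mlog rho).
Proof.
move=> hH rho_density unit_rho.
have [r_gt0 r1] := density_eigvals rho_density unit_rho.
have uU := spectral_unitarymx H; have uW := spectral_unitarymx rho.
have uY : spectralmx H *m hadj (spectralmx rho) \is unitarymx.
  by rewrite mul_unitarymx ?hadj_unitary.
rewrite {1}(hermitian_diag_conj hH) {1 2}(hermitian_diag_conj rho_density.1.1).
rewrite /mlog fcalc_eigvals diag_conjM // tr_diag_conj // tr_diag_conjM //.
rewrite -rmorphD lecR /log_partition.
apply: gibbs_doubly_stochastic => //.
- by move=> i; exact: unitary_sqmod_row.
- by move=> j; exact: unitary_sqmod_col.
- by move=> i j; exact: sqmod_ge0.
Qed.

Lemma relent_gibbs_state n (H rho : 'M[C]_n) :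
  (0 < n)%N -> H \is hermsymmx -> \tr rho = 1 ->
  \tr ((mlog rho - H) *m (gibbs_state H - rho)) + relent (gibbs_state H) rho =
  \tr (H *m rho) - \tr (rho *m mlog rho) - (log_partition H)%:C.
Proof.
move=> n_gt0 hH tr_rho.
rewrite /relent tr_xlogx_gibbs_state // mulmxBl !mulmxBr !linearB /=.
rewrite tr_gibbs_state // tr_rho [\tr (mlog rho *m rho)]mxtrace_mulC.
rewrite [\tr (mlog rho *m gibbs_state H)]mxtrace_mulC; ring.
Qed.

End GibbsState.

Theorem lemma5 (R : realType) (d : nat) (f : 'M[R[i]]_d -> R)
  (rho G : 'M[R[i]]_d) (alpha : R) :
  convex_herm f ->
  density rho -> nonsingular rho ->
  herm_gradient f rho G ->
  0 < alpha ->
  hip G (rho_step G rho alpha - rho)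
    <= - relent (rho_step G rho alpha) rho / alpha%:C.
Proof.
move=> _ rho_density unit_rho [hG _] alpha_gt0.
have d_gt0 := sum1_ord_gt0 rho_density.2.
set H := mlog rho - alpha%:C *: G.
have hH : H \is hermsymmx by apply: hermitianB_realZ; rewrite ?fcalc_hermitian.
have -> : rho_step G rho alpha = gibbs_state H by [].
have hip_scale : hip G (gibbs_state H - rho) * alpha%:C =
    \tr ((mlog rho - H) *m (gibbs_state H - rho)).
  by rewrite /H subKr -scalemxAl mxtraceZ mulrC /hip (hermitianP _ hG).
rewrite ler_pdivlMr ?ltcR // -subr_ge0 -opprD oppr_ge0 addrC hip_scale.
rewrite relent_gibbs_state ?rho_density.2 // -addrA -opprD subr_le0 addrC.
exact: gibbs_variational.
Qed.
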